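(* Let $f_d\in\mathbb{Z}[t]$ be an irreducible polynomial of degree $d$ with leading coefficient $A$, and define $\phi_d(x,y)=y^df_d(x/y)$. Suppose that there exists a quadratic polynomial $g\in\mathbb{Q}[t]$ such that $f_d(g(t))$ is reducible in $\mathbb{Q}[t]$. Then the equation $Az^2=\phi_d(x,y)$ has a solution $(x,y,z)\in\mathbb{Q}^3$ with $yz\ne 0$. *)

From mathcomp Require Import all_boot all_order all_algebra.
Set Implicit Arguments. Unset Strict Implicit. Unset Printing Implicit Defensive.
Import GRing.Theory Num.Theory.
Local Open Scope ring_scope.

Definition polyQ (f : {poly int}) : {poly rat} := map_poly (fun a : int => a%:~R) f.

(* phi_d(x,y) = y^d f(x/y), written as the homogenization of f of degree
   d = deg f:  sum_i f_i x^i y^(d-i). *)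
Definition phi (f : {poly int}) (x y : rat) : rat :=
  \sum_(i < size f) (f`_i)%:~R * x ^+ i * y ^+ ((size f).-1 - i).

From mathcomp Require Import all_boot all_order all_algebra.
From mathcomp Require Import ring zify.
From Stdlib Require Import Classical.

(** Completing the square, [g = a (t + t0)^2 + c], so [f \Po g] is a shift of
    [h (X^2)] with [h = f (a X + c)] irreducible of degree [d = deg f].
    Capelli-type argument: if [h] is irreducible, [h(0) != 0] and [h (X^2)] is
    reducible, an irreducible factor [p] of [h (X^2)] is coprime to [p (-X)]
    (otherwise [p (-X) = +-p], so [p] is either even, hence of the form
    [q (X^2)] with [q | h], or odd, hence vanishes at 0), so the even
    polynomial [p (X) p (-X)] is associate to [h (X^2)].  Comparing constant
    and leading coefficients of [h (X^2) = lam p (X) p (-X)] gives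
    [(-1)^d h(0) = lead(h) w^2] with [w = p(0) / lead(p)], i.e.
    [(-1)^d f(c) = A a^d w^2], and [(x, y, z) = (-c/a, -1/a, w)] is a solution.
    For [d = 1] take [c] with [f(c) = -A] and [a = w = 1]. *)

Set Implicit Arguments.
Unset Strict Implicit.
Unset Printing Implicit Defensive.
Import GRing.Theory Num.Theory.
Local Open Scope ring_scope.

Section PolyField.

Variable F : fieldType.
Implicit Types (p q r : {poly F}) (a b : F).

Lemma size_scaleX_addC a b : a != 0 -> size (a *: 'X + b%:P) = 2%N.
Proof.
by move=> a0; rewrite -mul_polyC size_MXaddC polyC_eq0 (negPf a0) size_polyC a0.
Qed.

Lemma lead_coef_scaleX_addC a b : a != 0 -> lead_coef (a *: 'X + b%:P) = a.
Proof.
move=> a0; rewrite lead_coefE size_scaleX_addC //.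
by rewrite coefD coefZ coefX coefC mulr1 addr0.
Qed.

Lemma comp_poly_scaleX_addC a b c d :
  (a *: 'X + b%:P) \Po (c *: 'X + d%:P) = (a * c) *: 'X + (a * d + b)%:P.
Proof.
rewrite comp_polyD comp_polyZ comp_polyX comp_polyC -!mul_polyC polyCD !polyCM.
ring.
Qed.

Lemma size2_polyE q : size q = 2%N -> q = lead_coef q *: 'X + (q`_0)%:P.
Proof.
move=> sq; apply/polyP => i; rewrite coefD coefZ coefX coefC lead_coefE sq.
case: i => [|[|i]]; rewrite ?mulr0 ?mulr1 ?add0r ?addr0 //.
by rewrite nth_default ?sq.
Qed.

Lemma size3_polyE q :
  size q = 3%N -> q = q`_2 *: 'X^2 + q`_1 *: 'X + (q`_0)%:P.
Proof.
move=> sq; apply/polyP => i; rewrite !coefD !coefZ coefXn coefX coefC.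
case: i => [|[|[|i]]]; rewrite ?mulr0 ?mulr1 ?add0r ?addr0 //.
by rewrite nth_default ?sq.
Qed.

Lemma comp_poly2_inv q : size q = 2%N ->
  exists2 q' : {poly F}, size q' = 2%N & q \Po q' = 'X /\ q' \Po q = 'X.
Proof.
move=> sq; rewrite (size2_polyE sq).
have : lead_coef q != 0 by rewrite lead_coef_eq0 -size_poly_gt0 sq.
move: (lead_coef q) (q`_0) => a b a0.
exists (a^-1 *: 'X + (- (b / a))%:P).
  by rewrite size_scaleX_addC ?invr_eq0.
rewrite !comp_poly_scaleX_addC mulfV // mulVf // mulrN mulrCA mulfV // mulr1.
by rewrite addNr mulrC addrN !scale1r !addr0.
Qed.

Lemma irredp_comp_poly2 p q :
  size q = 2%N -> irreducible_poly p -> irreducible_poly (p \Po q).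
Proof.
move=> sq [sp irr_p]; split=> [|r sr r_dvd]; first by rewrite size_comp_poly2.
have [q' sq' [qq' q'q]] := comp_poly2_inv sq.
have /(irr_p _) : r \Po q' %| p.
  by rewrite -[p]comp_polyXr -qq' comp_polyA dvdp_comp_poly.
rewrite size_comp_poly2 // => /(_ sr) /andP[rp pr].
by rewrite -[r]comp_polyXr -q'q comp_polyA /eqp !dvdp_comp_poly.
Qed.

Lemma irredp_root_size2 p x : irreducible_poly p -> root p x -> size p = 2%N.
Proof.
move=> irr_p; rewrite root_factor_theorem => /(irredp_XsubCP irr_p)[|/eqp_size].
  by rewrite -size_poly_eq1 size_XsubC.
by rewrite size_XsubC.
Qed.

Lemma reducible_proper_dvdp p : (1 < size p)%N -> ~ irreducible_poly p ->
  exists2 q, q %| p & (1 < size q < size p)%N.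
Proof.
move=> sp red_p; apply: NNPP => no_q; apply: red_p; split=> // q sq q_dvd.
have p0 : p != 0 by rewrite -size_poly_gt0 ltnW.
rewrite -dvdp_size_eqp // eqn_leq dvdp_leq //= leqNgt; apply/negP => ltqp.
apply: no_q; exists q => //.
by rewrite ltqp andbT ltn_neqAle eq_sym sq size_poly_gt0 (dvdpN0 q_dvd).
Qed.

Lemma irredp_dvdp_exists p : (1 < size p)%N ->
  exists2 r, irreducible_poly r & r %| p.
Proof.
elim: {p}_.+1 {-2}p (ltnSn (size p)) => // n IHn p sp_n sp.
have [irr_p | red_p] := classic (irreducible_poly p); first by exists p.
have [q q_dvd /andP[sq1 sqp]] := reducible_proper_dvdp sp red_p.
have [r irr_r r_dvd] := IHn q (leq_trans sqp sp_n) sq1.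
by exists r => //; apply: dvdp_trans q_dvd.
Qed.

Lemma eqp_comp_poly p r q : p %= r -> p \Po q %= r \Po q.
Proof. by move=> /andP[pr rp]; rewrite /eqp !dvdp_comp_poly. Qed.

Lemma dvdp_comp_poly_eq p r q :
  (1 < size q)%N -> (p \Po q %| r \Po q) = (p %| r).
Proof.
move=> sq; apply/idP/idP => [|/dvdp_comp_poly//].
have [-> | p0] := eqVneq p 0; first by rewrite comp_poly0 !dvd0p comp_poly_eq0.
rewrite {1}(divp_eq r p) comp_polyD comp_polyM dvdp_addr ?dvdp_mull //.
move=> m_dvd; apply/modp_eq0P; have := ltn_modpN0 r p0.
move: (r %% p) m_dvd => m m_dvd lt_mp; have [//|m0] := eqVneq m 0; exfalso.
have := dvdp_leq _ m_dvd; rewrite comp_poly_eq0 // => /(_ m0).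
have := size_comp_poly p q; have := size_comp_poly m q.
rewrite -size_poly_gt0 in m0; move: sq lt_mp m0.
move: (size m) (size p) (size q) (size (m \Po q)) (size (p \Po q)); nia.
Qed.

Lemma size_polyNX : size (- 'X : {poly F}) = 2%N.
Proof. by rewrite size_polyN size_polyX. Qed.

Lemma comp_polyNXK p : p \Po (- 'X) \Po (- 'X) = p.
Proof.
by rewrite -comp_polyA -[- 'X]sub0r comp_polyB comp_polyC comp_polyX !sub0r
  opprK comp_polyXr.
Qed.

Lemma comp_polyX2_NX p : p \Po 'X^2 \Po (- 'X) = p \Po 'X^2.
Proof. by rewrite -comp_polyA expr2 comp_polyM comp_polyX mulrNN. Qed.

Lemma lead_coef_comp_polyNX p :
  lead_coef (p \Po (- 'X)) = (-1) ^+ (size p).-1 * lead_coef p.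
Proof.
by rewrite lead_coef_comp ?size_polyNX // lead_coefN lead_coefX mulrC.
Qed.

Lemma eqp_comp_polyNX p :
  p %= p \Po (- 'X) -> p \Po (- 'X) = (-1) ^+ (size p).-1 *: p.
Proof.
have [-> _ | p0] := eqVneq p 0; first by rewrite comp_poly0 scaler0.
move=> /eqpP[[c1 c2] /andP[c10 c20] /= e]; apply: (scalerI c20).
rewrite -e scalerA; congr (_ *: p).
have lp0 : lead_coef p != 0 by rewrite lead_coef_eq0.
move/(congr1 lead_coef): e.
by rewrite !lead_coefZ lead_coef_comp_polyNX mulrA => /(mulIf lp0).
Qed.

End PolyField.

Section CharNot2.

Variable F : fieldType.
Hypothesis two_neq0 : 2 != 0 :> F.
Implicit Types (p g h : {poly F}).

Lemma even_comp_polyX2 p : p \Po (- 'X) = p -> p = even_poly p \Po 'X^2.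
Proof.
have Dp := poly_even_odd p.
set E := even_poly p \Po _ in Dp *; set O := odd_poly p \Po _ in Dp.
have -> : p \Po (- 'X) = E - O * 'X.
  by rewrite -{1}Dp comp_polyD comp_polyM !comp_polyX2_NX comp_polyX mulrN.
rewrite -{1}Dp => /addrI /eqP; rewrite eq_sym -subr_eq0 opprK -mulr2n.
rewrite -mulr_natl mulf_eq0 -polyC_natr polyC_eq0 (negPf two_neq0).
by rewrite mulf_eq0 polyX_eq0 orbF => /eqP O0; rewrite -{1}Dp O0 mul0r addr0.
Qed.

Lemma root0_comp_polyNX_eqN p : p \Po (- 'X) = - p -> root p 0.
Proof.
move/(congr1 (horner^~ 0)) => /eqP; rewrite /= horner_comp !hornerN hornerX.
by rewrite oppr0 -addr_eq0 -mulr2n -mulr_natl mulf_eq0 (negPf two_neq0).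
Qed.

Lemma complete_square g : size g = 3%N ->
  exists a c t, a != 0 /\ g = (a *: 'X + c%:P) \Po ('X^2 \Po ('X + t%:P)).
Proof.
move=> sg; have a0 : g`_2 != 0.
  by move: (lead_coef_eq0 g); rewrite lead_coefE sg -size_poly_eq0 sg => ->.
have [t bE] : exists t, g`_1 = 2 * g`_2 * t.
  by exists (g`_1 / (2 * g`_2)); field; rewrite a0 two_neq0.
exists g`_2, (g`_0 - g`_2 * t ^+ 2), t; split=> //.
rewrite {1}(size3_polyE sg) bE comp_polyD comp_polyZ comp_polyX comp_polyC.
rewrite expr2 comp_polyM comp_polyX -!mul_polyC.
rewrite !(rmorphD, rmorphM, rmorphN, rmorphXn, rmorph_nat) /=.
ring.
Qed.

Section ReducibleCompX2.

Variable h : {poly F}.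
Hypotheses (h_irr : irreducible_poly h) (h_root0 : ~~ root h 0).
Local Notation H := (h \Po 'X^2).

Lemma even_dvdp_eqp m : m %| H -> m \Po (- 'X) = m -> (1 < size m)%N -> m %= H.
Proof.
move=> + /even_comp_polyX2 Dm; rewrite Dm dvdp_comp_poly_eq ?size_polyXn //.
move=> M_dvd sm; apply: eqp_comp_poly; apply: h_irr M_dvd.
apply/negP => /size_poly1P[c _ Mc].
by move: sm; rewrite Mc comp_polyC size_polyC; case: (c != 0).
Qed.

Lemma coprimep_comp_polyNX p :
  irreducible_poly p -> p %| H -> (size p < size H)%N ->
  coprimep p (p \Po (- 'X)).
Proof.
move=> p_irr p_dvd lt_pH; rewrite irreducible_poly_coprime //.
apply/negP => pp'; have : p %= p \Po (- 'X).
  by rewrite -dvdp_size_eqp // size_comp_poly2 ?size_polyNX.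
move/eqp_comp_polyNX; rewrite -signr_odd; case: (odd _); rewrite /= ?scaleN1r.
- move=> /root0_comp_polyNX_eqN /(root_dvdp p_dvd).
  by rewrite /root horner_comp hornerXn expr2 mulr0; apply/negP.
- rewrite scale1r => /(even_dvdp_eqp p_dvd) /(_ p_irr.1) /eqp_size.
  by move: lt_pH => /[swap] ->; rewrite ltnn.
Qed.

Lemma comp_polyX2_reducible : ~ irreducible_poly H ->
  exists p lam, size p = size h /\ H = lam *: (p * (p \Po (- 'X))).
Proof.
(* [lia] compares [size] atoms syntactically, hence the type ascriptions and
   generalizations of the sizes below. *)
move=> H_red; have sh : (1 < size h)%N := h_irr.1.
have sH : (size H).-1 = ((size h).-1 * 2)%N.
  by rewrite size_comp_poly size_polyXn.
have sH1 : (1 < size H)%N by lia.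
have [q q_dvd /andP[sq sqH]] := reducible_proper_dvdp sH1 H_red.
have [p p_irr p_dvd] := irredp_dvdp_exists sq.
have H0 : H != 0 by rewrite -size_poly_gt0; lia.
have pH := dvdp_trans p_dvd q_dvd.
have lt_pH : (size p < size H)%N.
  by rewrite (leq_ltn_trans (dvdp_leq (dvdpN0 q_dvd H0) p_dvd)).
have p'H : p \Po (- 'X) %| H by rewrite -comp_polyX2_NX dvdp_comp_poly.
have p0 := irredp_neq0 p_irr.
have sm : size (p * (p \Po (- 'X))) = (size p + size p).-1.
  by rewrite size_mul ?comp_poly2_eq0 ?size_comp_poly2 ?size_polyNX.
have sp : (1 < size p)%N := p_irr.1.
have mH : p * (p \Po (- 'X)) %= H.
  apply: even_dvdp_eqp; last by rewrite sm; lia.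
    by rewrite Gauss_dvdp ?coprimep_comp_polyNX // pH p'H.
  by rewrite comp_polyM comp_polyNXK mulrC.
have /eqpP[[c1 c2] /andP[_ c20] /= e] := mH.
exists p, (c1 / c2); split.
  move: (eqp_size mH) sH sp sh; rewrite sm.
  by move: (size p) (size h) (size H); lia.
by rewrite mulrC -scalerA e scalerA mulVf // scale1r.
Qed.

End ReducibleCompX2.

Lemma reducible_comp_polyX2_horner0 h :
  irreducible_poly h -> (2 < size h)%N -> ~ irreducible_poly (h \Po 'X^2) ->
  exists2 w, w != 0 & (-1) ^+ (size h).-1 * h.[0] = lead_coef h * w ^+ 2.
Proof.
move=> h_irr sh H_red.
have h_root0 : ~~ root h 0.
  by apply: contraTN sh => /(irredp_root_size2 h_irr) ->.
have [p [lam [sp DH]]] := comp_polyX2_reducible h_irr h_root0 H_red.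
have h0E : h.[0] = lam * p.[0] ^+ 2.
  move/(congr1 (horner^~ 0)): DH.
  rewrite /= horner_comp hornerXn expr2 mulr0 => ->.
  by rewrite hornerZ hornerM horner_comp hornerN hornerX oppr0.
have lhE : lead_coef h = lam * ((-1) ^+ (size h).-1 * lead_coef p ^+ 2).
  move/(congr1 lead_coef): DH; rewrite lead_coef_comp ?size_polyXn //.
  rewrite lead_coefXn expr1n mulr1 => ->.
  by rewrite lead_coefZ lead_coefM lead_coef_comp_polyNX sp; ring.
have lp0 : lead_coef p != 0.
  by rewrite lead_coef_eq0 -size_poly_gt0 sp (ltn_trans _ sh).
exists (p.[0] / lead_coef p).
  rewrite mulf_neq0 ?invr_eq0 //; apply: contraNneq h_root0 => p00.
  by rewrite /root h0E p00 expr2 mul0r mulr0.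
by rewrite h0E lhE -{1}(divfK lp0 p.[0]); ring.
Qed.

Lemma reducible_comp_quadratic p g :
  irreducible_poly p -> (2 < size p)%N -> size g = 3%N ->
  ~ irreducible_poly (p \Po g) ->
  exists a c w, [/\ a != 0, w != 0 &
    (-1) ^+ (size p).-1 * p.[c] = lead_coef p * a ^+ (size p).-1 * w ^+ 2].
Proof.
move=> p_irr sp sg pg_red.
have [a [c [t [a0 Dg]]]] := complete_square sg.
have s_lin : size (a *: 'X + c%:P) = 2%N := size_scaleX_addC c a0.
set h := p \Po (a *: 'X + c%:P).
have sh : size h = size p := size_comp_poly2 p s_lin.
have h_irr : irreducible_poly h := irredp_comp_poly2 s_lin p_irr.
have H_red : ~ irreducible_poly (h \Po 'X^2).
  move=> H_irr; apply: pg_red; rewrite Dg !comp_polyA.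
  by apply: irredp_comp_poly2 H_irr; rewrite size_XaddC.
have [|w w0 hw] := reducible_comp_polyX2_horner0 h_irr _ H_red.
  by rewrite sh.
exists a, c, w; split => //; move: hw.
rewrite sh horner_comp hornerD hornerZ hornerX hornerC mulr0 add0r.
by rewrite lead_coef_comp ?s_lin // lead_coef_scaleX_addC // -mulrA.
Qed.

End CharNot2.

Implicit Types (f : {poly int}) (a c w x y : rat).

Lemma size_polyQ f : size (polyQ f) = size f.
Proof. by rewrite size_map_inj_poly //; apply: intr_inj. Qed.

Lemma lead_coef_polyQ f : lead_coef (polyQ f) = (lead_coef f)%:~R.
Proof. by rewrite lead_coef_map_inj //; apply: intr_inj. Qed.

Lemma phiE f x y : y != 0 -> phi f x y = y ^+ (size f).-1 * (polyQ f).[x / y].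
Proof.
move=> y0; rewrite horner_coef size_polyQ /phi mulr_sumr; apply: eq_bigr => i _.
have le_i : (i <= (size f).-1)%N by have := ltn_ord i; lia.
rewrite coef_map_id0 // -{2}(subnK le_i) exprD exprMn exprVn.
by field; rewrite expf_neq0.
Qed.

Lemma phi_solution f a c w : a != 0 -> w != 0 ->
    (-1) ^+ (size f).-1 * (polyQ f).[c] =
      (lead_coef f)%:~R * a ^+ (size f).-1 * w ^+ 2 ->
  exists x y z : rat, y * z != 0 /\ (lead_coef f)%:~R * z ^+ 2 = phi f x y.
Proof.
move=> a0 w0 fc; have y0 : - a^-1 != 0 by rewrite oppr_eq0 invr_eq0.
exists (- c / a), (- a^-1), w; split; first by rewrite mulf_neq0.
rewrite phiE // (_ : - c / a / - a^-1 = c); last by field.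
rewrite -mulN1r exprMn mulrAC fc exprVn.
by field; rewrite expf_neq0.
Qed.

Theorem theorem6p1 (f : {poly int}) :
  irreducible_poly (polyQ f) ->
  (exists g : {poly rat}, size g = 3%N /\ ~ irreducible_poly (polyQ f \Po g)) ->
  exists x y z : rat, y * z != 0 /\
    (lead_coef f)%:~R * z ^+ 2 = phi f x y.
Proof.
move=> f_irr [g [sg fg_red]].
have [a [c [w [a0 w0 fc]]]] : exists a c w, [/\ a != 0, w != 0 &
    (-1) ^+ (size f).-1 * (polyQ f).[c] =
      (lead_coef f)%:~R * a ^+ (size f).-1 * w ^+ 2].
  rewrite -size_polyQ -lead_coef_polyQ.
  have s1 : (1 < size (polyQ f))%N := f_irr.1.
  have [s2 | s3] : size (polyQ f) = 2%N \/ (2 < size (polyQ f))%N by lia.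
  - have [|c] := poly2_root (p := polyQ f + (lead_coef (polyQ f))%:P).
      by rewrite size_polyDl s2 // size_polyC; case: (_ != 0).
    rewrite /root hornerD hornerC addr_eq0 => /eqP fc.
    by exists 1, c, 1; rewrite s2 fc expr1n !mulr1 expr1 mulN1r opprK.
  - exact: reducible_comp_quadratic _ f_irr s3 sg fg_red.
exact: phi_solution a0 w0 fc.
Qed.
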